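(* Assume the setting and Assumptions A1 and A2 described in the context. Then for every $\beta\in[0,1/2)$, \[ \sum_{k\ge1}k^{-1/2}D_\beta(\theta_k,\theta_{k-1})V^\beta(X_k)<\infty\qquad\mathbb P\text{-a.s.} \]
   Context: Setting: $(\mathsf X,\mathcal X)$ is a measurable space with countably generated $\sigma$-field, $(\Theta,\mathcal T)$ a measurable space, $\pi$ a probability measure on $(\mathsf X,\mathcal X)$, and $\{P_\theta,\theta\in\Theta\}$ a family of Markov transition kernels on $\mathsf X$ such that $\theta\mapsto P_\theta(x,A)$ is measurable for every $(x,A)$ and each $P_\theta$ admits $\pi$ as invariant distribution. Let $\bar\mu$ be a probability measure on $\mathsf X\times\Theta$ and $\{(X_n,\theta_n),n\ge0\}$ a process with law $\mathbb P$ (expectation $\mathbb E$) and natural filtration $\mathcal F_n$, such that $(X_0,\theta_0)\sim\bar\mu$ and for every $n\ge0$ and nonnegative measurable $f$, $\mathbb E(f(X_{n+1})\mid\mathcal F_n)=P_{\theta_n}f(X_n)$ a.s. Notation: $Qf(x)=\int Q(x,dy)f(y)$; for $W:\mathsf X\to[1,\infty)$, $|f|_W=\sup_{\mathsf X}|f|/W$, and $\|\mu\|_W=\sup_{|g|_W\le1}|\mu(g)|$. For $\beta\in[0,1]$, $D_\beta(\theta,\theta')=\sup_{|f|_{V^\beta}\le1}\sup_{x}|P_\theta f(x)-P_{\theta'}f(x)|/V^\beta(x)$. Assumption A1: each $P_\theta$ is phi-irreducible and aperiodic with invariant distribution $\pi$; there is a measurable $V:\mathsf X\to[1,\infty)$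 with $\int V(x)\bar\mu(dx,d\theta)<\infty$ such that for every $\beta\in(0,1]$ there exist $\rho\in(0,1)$, $C<\infty$ with $\|P_\theta^n(x,\cdot)-\pi\|_{V^\beta}\le C\rho^nV^\beta(x)$ for all $(x,\theta)$, $n\ge0$; and there exist $b<\infty$, $\lambda\in(0,1)$ with $P_\theta V(x)\le\lambda V(x)+b$ for all $(x,\theta)$. Assumption A2: there exist $\eta\in[0,1/2)$ and a nonincreasing sequence of positive numbers $\{\gamma_n,n\ge1\}$ with $\gamma_n=O(n^{-\alpha})$ for some $\alpha>1/2$, such that for every $\beta\in[0,1]$ there is a finite constant $C$ with $D_\beta(\theta_{n-1},\theta_n)\le C\gamma_nV^\eta(X_n)$ $\mathbb P$-a.s. for all $n\ge1$. *)

From HB Require Import structures.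
From mathcomp Require Import all_boot all_order all_algebra.
From mathcomp Require Import all_classical all_reals all_analysis.
From mathcomp Require Import measurable_realfun.
Set Implicit Arguments. Unset Strict Implicit. Unset Printing Implicit Defensive.
Import Order.TTheory GRing.Theory Num.Theory.
Import numFieldNormedType.Exports.
Local Open Scope classical_set_scope.
Local Open Scope ring_scope.

Section Defs.
Context {R : realType}.

Definition countably_generated d (X : measurableType d) : Prop :=
  exists G : nat -> set X, (@measurable d X) = <<s range G >>.

Definition kiter d (X : measurableType d) (K : X -> probability X R)
  (n : nat) (g : X -> \bar R) : X -> \bar R :=
  iter n (fun h x => (\int[K x]_y h y)%E) g.

Definition phi_irreducible d (X : measurableType d) (K : X -> probability X R)
  : Prop :=
  exists phi : {measure set X -> \bar R},
    sigma_finite setT phi /\ (0 < phi setT)%E /\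
    forall A, measurable A -> (0 < phi A)%E -> forall x,
      exists n, (0 < n)%N /\ (0 < kiter K n (fun y => (\1_A y)%:E) x)%E.

(* aperiodicity (Roberts-Rosenthal style, relative to the invariant pi):
   there is no d >= 2 and disjoint measurable sets D_0,...,D_{d-1} with
   P(x, D_{i+1 mod d}) = 1 for x in D_i and pi(D_0) > 0 *)
Definition aperiodic d (X : measurableType d) (K : X -> probability X R)
  (pi : probability X R) : Prop :=
  ~ exists (p : nat) (D : nat -> set X),
      [/\ (2 <= p)%N,
          (forall i, (i < p)%N -> measurable (D i)),
          (forall i j, (i < j < p)%N -> D i `&` D j = set0),
          (forall i x, (i < p)%N -> D i x -> K x (D ((i.+1) %% p)%N) = 1%E)
        & (0 < pi (D 0%N))%E].

Definition Dbeta d (X : measurableType d) (Theta : Type)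
  (P : Theta -> X -> probability X R) (V : X -> R) (beta : R)
  (th th' : Theta) : \bar R :=
  ereal_sup [set e | exists (f : X -> R) (x : X),
     [/\ measurable_fun setT f,
         (forall y, `|f y| <= V y `^ beta)
       & e = (`| \int[P th x]_y (f y)%:E - \int[P th' x]_y (f y)%:E |
              * ((V x `^ beta)^-1)%:E)%E]].

Definition nat_filtration dO dX dT (Omega : measurableType dO)
  (X : measurableType dX) (Theta : measurableType dT)
  (Xs : nat -> Omega -> X) (ths : nat -> Omega -> Theta) (n : nat)
  : set (set Omega) :=
  <<s [set B | exists k, (k <= n)%N /\
        ((exists A : set X, measurable A /\ B = Xs k @^-1` A) \/
         (exists A : set Theta, measurable A /\ B = ths k @^-1` A))] >>.

End Defs.

From HB Require Import structures.
From mathcomp Require Import all_boot all_order all_algebra.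
From mathcomp Require Import all_classical all_reals all_analysis.
From mathcomp Require Import measurable_realfun.
From mathcomp Require Import ring lra.
Import Order.TTheory GRing.Theory Num.Theory.
Import numFieldNormedType.Exports.
Local Open Scope classical_set_scope.
Local Open Scope ring_scope.

(* The drift condition P_theta V <= lam V + b propagates along the adaptive
   chain through the Markov property, so E[V(X_k)] stays bounded.  By A2,
   D_beta(theta_k, theta_(k-1)) V^beta(X_k) <= C gamma_k V^(eta+beta)(X_k)
   <= C gamma_k V(X_k) since eta + beta < 1 and V >= 1; hence the expected
   value of the series is at most sup_k E[V(X_k)] * sum_k k^(-1/2) C gamma_k,
   which is finite because k^(-1/2) gamma_k = O(k^(-1/2-alpha)) with
   alpha > 1/2.  A nonnegative series with finite expectation is a.s. finite. *)

Lemma powR_telescope {R : realType} (s x : R) : 0 < s -> 0 < x ->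
  s * (x + 1) `^ (- (1 + s)) <= x `^ (- s) - (x + 1) `^ (- s).
Proof.
move=> s0 x0; have x10 : 0 < x + 1 by lra.
rewrite /powR (gt_eqF x0) (gt_eqF x10).
set L := ln x; set M := ln (x + 1).
have LM : (x + 1)^-1 <= M - L.
  have h1 : 0 < 1 - (x + 1)^-1 by rewrite subr_gt0 invf_lt1 //; lra.
  have -> : L = M + ln (1 - (x + 1)^-1).
    by rewrite /L /M -lnM ?posrE //; congr ln; field; rewrite gt_eqF.
  suff : ln (1 - (x + 1)^-1) <= - (x + 1)^-1 by lra.
  by apply: le_ln1Dx; rewrite ltrN2 invf_lt1 //; lra.
have e0 : 0 < expR (- s * M) by apply: expR_gt0.
have -> : expR (- (1 + s) * M) = expR (- s * M) * (x + 1)^-1.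
  rewrite -[in RHS](lnK (x := x + 1)) ?posrE // -expRN -expRD; congr expR.
  rewrite /M; ring.
have -> : expR (- s * L) = expR (- s * M) * expR (s * (M - L)).
  by rewrite -expRD; congr expR; ring.
have : s * (x + 1)^-1 <= expR (s * (M - L)) - 1.
  have := expR_ge1Dx (s * (M - L)); have : s * (x + 1)^-1 <= s * (M - L).
    by rewrite ler_pM2l.
  lra.
by rewrite -(ler_pM2l e0); lra.
Qed.

Lemma sum_powR_telescope {R : realType} (s : R) (N n : nat) : 0 < s -> (0 < N)%N ->
  s * \sum_(N <= k < N + n) k.+1%:R `^ (- (1 + s))
    <= N%:R `^ (- s) - (N + n)%:R `^ (- s).
Proof.
move=> s0 N0; elim: n => [|n IHn]; first by rewrite addn0 big_geq // mulr0 subrr.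
rewrite addnS big_nat_recr ?leq_addr //= mulrDr -natr1.
have := @powR_telescope R s (N + n)%:R s0; rewrite ltr0n addn_gt0 N0 => /(_ isT).
lra.
Qed.

Lemma nneseries_lt_pinfty_bounded {R : realType} (a : nat -> R) (B : R) :
  (forall k, 0 <= a k) -> (forall n, \sum_(0 <= k < n) a k <= B) ->
  (\sum_(k <oo) (a k)%:E < +oo)%E.
Proof.
move=> a0 aB; apply: (@le_lt_trans _ _ B%:E); last exact: ltey.
apply: lime_le; first by apply: is_cvg_nneseries => k _ _; rewrite lee_fin.
by apply: nearW => n; rewrite sumEFin lee_fin.
Qed.

Lemma nneseries_powR_lt_pinfty {R : realType} (a : nat -> R) (s K : R) (N : nat) :
  0 < s -> 0 <= K -> (0 < N)%N -> (forall k, 0 <= a k) ->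
  (forall k, (N <= k)%N -> a k.+1 <= K * k.+1%:R `^ (- (1 + s))) ->
  (\sum_(k <oo) (a k)%:E < +oo)%E.
Proof.
move=> s0 K0 N0 a0 aK.
apply: (nneseries_lt_pinfty_bounded a
  (\sum_(0 <= k < N.+1) a k + K / s * N%:R `^ (- s))) => // n.
have tail : \sum_(N <= k < N + n) a k.+1 <= K / s * N%:R `^ (- s).
  apply: (@le_trans _ _ (K * \sum_(N <= k < N + n) k.+1%:R `^ (- (1 + s)))).
    by rewrite mulr_sumr; apply: ler_sum_nat => k /andP[Nk _]; exact: aK.
  rewrite -mulrA ler_wpM2l // ler_pdivlMl //.
  apply: le_trans (sum_powR_telescope s N n s0 N0) _.
  by rewrite gerBl powR_ge0.
apply: (@le_trans _ _ (\sum_(0 <= k < N.+1 + n) a k)).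
  rewrite [leRHS](big_cat_nat (leq0n n)) ?leq_addl //= lerDl.
  by apply: sumr_ge0 => k _.
rewrite (big_cat_nat (leq0n N.+1)) ?leq_addr //= lerD2l.
rewrite -[N.+1]addn1 -addnA add1n big_addn addnS subn1 /=.
by under eq_bigr do rewrite addn1.
Qed.

Lemma nneseries_rsqrt_mul_lt_pinfty {R : realType} (u : nat -> R) (alpha M : R)
  (N : nat) : 1/2 < alpha ->
  (forall n, (N <= n)%N -> `|u n| <= M * n%:R `^ (- alpha)) ->
  (\sum_(k <oo) (k%:R `^ (- (1/2)) * `|u k|)%:E < +oo)%E.
Proof.
move=> alpha_half uM.
apply: (nneseries_powR_lt_pinfty _ (alpha - 1/2) `|M| N.+1) => [|||k|k Nk].
- lra.
- exact: normr_ge0.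
- by [].
- by rewrite mulr_ge0 ?powR_ge0.
have -> : - (1 + (alpha - 1/2)) = - (1/2) - alpha :> R by lra.
rewrite powRD ?pnatr_eq0 ?implybT // mulrCA ler_wpM2l ?powR_ge0 //.
apply: (le_trans (uM _ (leqW (leq_trans (leqnSn N) Nk)))).
by rewrite ler_wpM2r ?powR_ge0 ?ler_norm.
Qed.

Lemma affine_recursion_bounded {R : realType} (m : nat -> \bar R) (lam b : R) :
  0 <= lam < 1 -> 0 <= b -> (forall n, 0 <= m n)%E -> m 0%N \is a fin_num ->
  (forall n, m n.+1 <= lam%:E * m n + b%:E)%E ->
  exists M : R, forall n, (m n <= M%:E)%E.
Proof.
move=> /andP[lam0 lam1] b0 m0 m0fin mS.
pose M := Num.max (fine (m 0%N)) (b / (1 - lam)).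
have bM : b <= (1 - lam) * M.
  by rewrite -ler_pdivrMl ?subr_gt0 // mulrC le_max lexx orbT.
exists M; elim=> [|n IHn]; first by rewrite -(fineK m0fin) lee_fin le_max lexx.
have mnfin : m n \is a fin_num by rewrite ge0_fin_numE // (le_lt_trans IHn) ?ltey.
apply: (le_trans (mS n)); move: IHn; rewrite -(fineK mnfin) -EFinM -EFinD !lee_fin.
move=> IHn; have : lam * fine (m n) <= lam * M by rewrite ler_wpM2l.
lra.
Qed.

(* The integral of a nonnegative function is a supremum over the simple
   functions below it, so monotonicity needs no measurability. *)
Lemma ge0_le_integral_nomeas {d} {T : measurableType d} {R : realType}
  (mu : {measure set T -> \bar R}) (f g : T -> \bar R) :
  (forall x, 0 <= f x)%E -> (forall x, f x <= g x)%E ->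
  (\int[mu]_x f x <= \int[mu]_x g x)%E.
Proof.
move=> f0 fg; have g0 x : (0 <= g x)%E by exact: le_trans (f0 x) (fg x).
rewrite !ge0_integralTE //; apply: ereal_sup_le => _ [h hf <-].
by exists h => // x; exact: le_trans (hf x) (fg x).
Qed.

Lemma ae_nneseries_lt_pinfty {d} {T : measurableType d} {R : realType}
  (mu : {measure set T -> \bar R}) (f : nat -> T -> \bar R) :
  (forall k x, 0 <= f k x)%E -> (forall k, measurable_fun setT (f k)) ->
  (\sum_(k <oo) \int[mu]_x f k x < +oo)%E ->
  {ae mu, forall x, (\sum_(k <oo) f k x < +oo)%E}.
Proof.
move=> f0 mf sumf.
have S0 x : (0 <= \sum_(k <oo) f k x)%E by apply: nneseries_ge0 => k _ _.
have intS : mu.-integrable setT (fun x => \sum_(k <oo) f k x)%E.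
  apply/integrableP; split; first exact: ge0_emeasurable_sum.
  under eq_integral do rewrite gee0_abs //.
  by rewrite integral_nneseries.
apply: filterS (integrable_ae measurableT intS) => x /(_ I).
by rewrite ge0_fin_numE.
Qed.

Lemma integral_law {dO dY} {Omega : measurableType dO} {Y : measurableType dY}
  {R : realType} (Pr : {measure set Omega -> \bar R}) (mu : {measure set Y -> \bar R})
  (Z : Omega -> Y) (f : Y -> \bar R) :
  measurable_fun setT Z -> (forall A, measurable A -> Pr (Z @^-1` A) = mu A) ->
  measurable_fun setT f -> (forall y, 0 <= f y)%E ->
  (\int[Pr]_w f (Z w) = \int[mu]_y f y)%E.
Proof.
move=> mZ lawZ mf f0.
rewrite [RHS](eq_measure_integral (pushforward Pr Z)) => [|A mA _]; last exact/esym/lawZ.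
by rewrite [RHS]ge0_integral_pushforward.
Qed.

Lemma integral_drift_le {dO dX} {Omega : measurableType dO} {X : measurableType dX}
  {R : realType} (Pr : probability Omega R) (K : Omega -> probability X R)
  (Y : Omega -> X) (V : X -> R) (lam b : R) :
  measurable_fun setT (V \o Y) -> 0 <= lam -> 0 <= b -> (forall x, 0 <= V x) ->
  (forall w, \int[K w]_y (V y)%:E <= (lam * V (Y w) + b)%:E)%E ->
  (\int[Pr]_w \int[K w]_y (V y)%:E <= lam%:E * \int[Pr]_w (V (Y w))%:E + b%:E)%E.
Proof.
move=> mVY lam0 b0 V0 drift.
have KV0 w : (0 <= \int[K w]_y (V y)%:E)%E.
  by apply: integral_ge0 => y _; rewrite lee_fin.
apply: (le_trans (ge0_le_integral_nomeas Pr _ _ KV0 drift)).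
under eq_integral do rewrite EFinD EFinM.
rewrite ge0_integralD //; last 2 first.
- by move=> w _; rewrite -EFinM lee_fin mulr_ge0.
- by apply/measurable_EFinP; exact: measurable_funM.
rewrite ge0_integralZl_EFin //; last 2 first.
- by move=> w _; rewrite lee_fin.
- by apply/measurable_EFinP.
rewrite integral_cst //.
suff -> : (b%:E * Pr setT = b%:E)%E by [].
by rewrite -[RHS]mule1; congr (_ * _)%E; exact: probability_setT.
Qed.

Lemma distreC {R : realType} (x y : \bar R) : (`|x - y| = `|y - x|)%E.
Proof. by case: x => [x||]; case: y => [y||] //=; rewrite distrC. Qed.

Lemma Dbeta_sym {d} {X : measurableType d} {Theta : Type} {R : realType}
  (P : Theta -> X -> probability X R) (V : X -> R) (beta : R) th th' :
  Dbeta P V beta th th' = Dbeta P V beta th' th.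
Proof.
rewrite /Dbeta; congr ereal_sup; apply/seteqP.
by split => _ [f [x [mf fV ->]]]; exists f, x; split => //; rewrite distreC.
Qed.

Lemma Dbeta_ge0 {d} {X : measurableType d} {Theta : Type} {R : realType}
  (P : Theta -> X -> probability X R) (V : X -> R) (beta : R) th th' :
  X -> (0 <= Dbeta P V beta th th')%E.
Proof.
move=> x; apply: ereal_sup_ubound; exists (fun=> 0), x; split.
- exact: measurable_cst.
- by move=> y; rewrite normr0 powR_ge0.
- by rewrite !integral0_eq // subee // abse0 mul0e.
Qed.

Lemma lee_mul_powR_of_le {R : realType} {D : \bar R} {u L v eta beta : R} :
  0 <= u -> 1 <= v -> eta + beta <= 1 ->
  (0 <= D)%E -> (D <= (L * v `^ eta)%:E)%E ->
  (u%:E * D * (v `^ beta)%:E <= (u * L * v)%:E)%E.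
Proof.
move=> u0 v1 etabeta D0 DL.
have Dfin : D \is a fin_num by rewrite ge0_fin_numE // (le_lt_trans DL) ?ltey.
move: D0 DL; rewrite -(fineK Dfin) -!EFinM !lee_fin; set d := fine D => d0 dL.
have ve0 : 0 < v `^ eta by rewrite powR_gt0 //; lra.
have L0 : 0 <= L by rewrite -(pmulr_lge0 _ ve0) (le_trans d0).
have vev : v `^ eta * v `^ beta <= v.
  rewrite -powRD; last by apply/implyP => _; rewrite gt_eqF //; lra.
  by rewrite -[leRHS]powRr1 ?ler_powR //; lra.
rewrite -!mulrA ler_wpM2l // (le_trans (ler_wpM2r (powR_ge0 _ _) dL)) //.
by rewrite -mulrA ler_wpM2l.
Qed.

Lemma nneseries_rsqrt_mul_powR_le {R : realType} (D : nat -> \bar R) (L v : nat -> R)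
  (eta beta : R) :
  eta + beta <= 1 -> (forall k, 0 <= L k) -> (forall k, 1 <= v k) ->
  (forall k, 0 <= D k)%E -> (forall k, (0 < k)%N -> D k <= (L k * v k `^ eta)%:E)%E ->
  (\sum_(1 <= k <oo) ((k%:R `^ (- (1/2)))%:E * D k * (v k `^ beta)%:E)
     <= \sum_(k <oo) (k%:R `^ (- (1/2)) * L k * v k)%:E)%E.
Proof.
move=> etabeta L0 v1 D0 DL.
have v0 k : 0 <= v k by apply: le_trans (v1 k).
have rhs0 k : (0 <= (k%:R `^ (- (1/2)) * L k * v k)%:E)%E.
  by rewrite lee_fin !mulr_ge0 ?powR_ge0.
apply: (@le_trans _ _ (\sum_(1 <= k <oo) (k%:R `^ (- (1/2)) * L k * v k)%:E)%E).
  apply: lee_nneseries => [k _ _|[|k] _].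
  - by rewrite !mule_ge0 ?lee_fin ?powR_ge0.
  (* the k = 0 term vanishes, as powR gives [0 `^ (- 1/2) = 0] *)
  - by rewrite mulr0n powR0 ?mul0e ?mul0r //; lra.
  - by apply: (lee_mul_powR_of_le _ (v1 _) etabeta (D0 _) (DL _ _)); rewrite ?powR_ge0.
rewrite [leRHS](nneseries_split 0 1) => [|k _] //.
by rewrite add0n big_nat1 leeDr.
Qed.

Section adaptive_chain.
Context {R : realType} {dX dT dO : measure_display}.
Context {X : measurableType dX} {Theta : measurableType dT} {Omega : measurableType dO}.
Context {Pr : probability Omega R} {P : Theta -> X -> probability X R}.
Context {Xs : nat -> Omega -> X} {ths : nat -> Omega -> Theta} {V : X -> R}.
Hypothesis hXmeas : forall n, measurable_fun setT (Xs n).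
Hypothesis hVmeas : measurable_fun setT V.
Hypothesis V_ge0 : forall x, 0 <= V x.

Let mVX k : measurable_fun setT (V \o Xs k).
Proof. exact: measurableT_comp. Qed.

Lemma nat_filtrationT n : nat_filtration Xs ths n setT.
Proof. by move=> S [[S0 SC _] _]; rewrite -(setD0 setT); exact: SC S0. Qed.

Lemma expectation_V_bounded :
  (\int[Pr]_w (V (Xs 0%N w))%:E < +oo)%E ->
  (forall n, \int[Pr]_w (V (Xs n.+1 w))%:E
     = \int[Pr]_w \int[P (ths n w) (Xs n w)]_y (V y)%:E)%E ->
  (exists b lam : R, 0 < lam < 1 /\
     forall th x, (\int[P th x]_y (V y)%:E <= (lam * V x + b)%:E)%E) ->
  exists M : R, forall k, (\int[Pr]_w (V (Xs k w))%:E <= M%:E)%E.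
Proof.
move=> EV0 markov [b [lam [/andP[lam0 lam1] drift]]].
have b_le : b <= Num.max b 0 by rewrite le_max lexx.
apply: (affine_recursion_bounded _ lam (Num.max b 0)).
- by rewrite ltW.
- by rewrite le_max lexx orbT.
- by move=> k; apply: integral_ge0 => w _; rewrite lee_fin.
- by rewrite ge0_fin_numE // integral_ge0 // => w _; rewrite lee_fin.
move=> n; rewrite markov; apply: integral_drift_le => //.
- exact: ltW.
- by rewrite le_max lexx orbT.
- by move=> w; apply: (le_trans (drift _ _)); rewrite lee_fin lerD2l.
Qed.

Lemma ae_nneseries_mulV_lt_pinfty (c : nat -> R) (M : R) :
  (forall k, 0 <= c k) -> (forall k, (\int[Pr]_w (V (Xs k w))%:E <= M%:E)%E) ->
  (\sum_(k <oo) (c k)%:E < +oo)%E ->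
  {ae Pr, forall w, (\sum_(k <oo) (c k * V (Xs k w))%:E < +oo)%E}.
Proof.
move=> c0 EVM sum_c; apply: ae_nneseries_lt_pinfty.
- by move=> k w; rewrite lee_fin mulr_ge0.
- by move=> k; apply/measurable_EFinP; apply: measurable_funM => //; exact: mVX.
apply: (@le_lt_trans _ _ (\sum_(k <oo) (M%:E * (c k)%:E))%E).
  apply: lee_nneseries => [k _ _|k _].
    by apply: integral_ge0 => w _; rewrite lee_fin mulr_ge0.
  under eq_integral do rewrite EFinM.
  rewrite ge0_integralZl_EFin //; last 2 first.
  - by move=> w _; rewrite lee_fin.
  - exact/measurable_EFinP/mVX.
  by rewrite [leRHS]muleC; apply: (lee_wpmul2l _ (EVM k)); rewrite lee_fin.
rewrite nneseriesZl => [|k _]; last by rewrite lee_fin.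
have M0 : 0 <= M.
  by rewrite -lee_fin (le_trans _ (EVM 0%N)) // integral_ge0 // => w _; rewrite lee_fin.
by rewrite lte_mul_pinfty ?lee_fin.
Qed.

End adaptive_chain.

Theorem proposition3p2
  (R : realType) (dX dT dO : measure_display)
  (X : measurableType dX) (Theta : measurableType dT)
  (Omega : measurableType dO) (Pr : probability Omega R)
  (pi : probability X R)
  (P : Theta -> X -> probability X R)
  (mubar : probability (X * Theta)%type R)
  (Xs : nat -> Omega -> X) (ths : nat -> Omega -> Theta)
  (V : X -> R)
  (* setting *)
  (hXcg : countably_generated X)
  (hPx : forall th A, measurable A -> measurable_fun setT (fun x => P th x A))
  (hPth : forall x A, measurable A -> measurable_fun setT (fun th => P th x A))
  (hinv : forall th A, measurable A ->
      (\int[pi]_x (P th x A) = pi A)%E)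
  (hXmeas : forall n, measurable_fun setT (Xs n))
  (hthmeas : forall n, measurable_fun setT (ths n))
  (hlaw0 : forall A, measurable A ->
      Pr ((fun w => (Xs 0%N w, ths 0%N w)) @^-1` A) = mubar A)
  (hmarkov : forall (n : nat) (f : X -> R),
      measurable_fun setT f -> (forall x, 0 <= f x) ->
      forall B, nat_filtration Xs ths n B ->
      (\int[Pr]_(w in B) (f (Xs n.+1 w))%:E
        = \int[Pr]_(w in B) \int[P (ths n w) (Xs n w)]_y (f y)%:E)%E)
  (* Assumption A1 *)
  (hirr : forall th, phi_irreducible (P th))
  (haper : forall th, aperiodic (P th) pi)
  (hVmeas : measurable_fun setT V)
  (hV1 : forall x, 1 <= V x)
  (hVint : (\int[mubar]_z (V z.1)%:E < +oo)%E)
  (hgeo : forall beta : R, 0 < beta <= 1 ->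
      exists rho C : R, 0 < rho < 1 /\
        (forall (g : X -> R), measurable_fun setT g ->
           (forall y, `|g y| <= V y `^ beta) ->
           forall th x n,
             (`| kiter (P th) n (fun y => (g y)%:E) x
                 - \int[pi]_y (g y)%:E | <= (C * rho ^+ n * V x `^ beta)%:E)%E))
  (hdrift : exists (b lam : R), 0 < lam < 1 /\
      forall th x, (\int[P th x]_y (V y)%:E <= (lam * V x + b)%:E)%E)
  (* Assumption A2 *)
  (hA2 : exists (eta : R) (gamma : nat -> R),
      [/\ 0 <= eta < 1/2,
          (forall n, (1 <= n)%N -> 0 < gamma n),
          (forall n, (1 <= n)%N -> gamma n.+1 <= gamma n),
          (exists alpha : R, 1/2 < alpha /\ exists (M : R) (N : nat),
             forall n, (N <= n)%N -> gamma n <= M * n%:R `^ (- alpha))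
        & forall beta : R, 0 <= beta <= 1 -> exists C : R,
            forall n, (1 <= n)%N ->
              {ae Pr, forall w,
                (Dbeta P V beta (ths n.-1 w) (ths n w)
                   <= (C * gamma n * V (Xs n w) `^ eta)%:E)%E}]) :
  forall beta : R, 0 <= beta < 1/2 ->
    {ae Pr, forall w,
      (\sum_(1 <= k <oo)
          ((k%:R `^ (- (1/2)))%:E * Dbeta P V beta (ths k w) (ths k.-1 w)
             * (V (Xs k w) `^ beta)%:E) < +oo)%E}.
Proof.
move=> beta /andP[beta0 beta_half].
case: hA2 => eta [gamma [/andP[eta0 eta_half] gamma_gt0 _ [alpha [alpha_half]]]].
move=> [M0 [N gammaM]] hD; have /hD[C hC] : 0 <= beta <= 1 by apply/andP; split; lra.
have V0 x : 0 <= V x by apply: le_trans (hV1 x); lra.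
have EV0 : (\int[Pr]_w (V (Xs 0%N w))%:E < +oo)%E.
  rewrite (integral_law Pr mubar _ (fun z => (V z.1)%:E) _ hlaw0) //.
  - exact: measurable_fun_pair.
  - by apply/measurable_EFinP; apply: measurableT_comp => //; exact: measurable_fst.
  - by move=> z; rewrite lee_fin.
have [M EVXM] := expectation_V_bounded hXmeas hVmeas V0 EV0
  (fun n => hmarkov n V hVmeas V0 setT (nat_filtrationT n)) hdrift.
pose c k := k%:R `^ (- (1/2)) * `|C * gamma k|.
have sum_c : (\sum_(k <oo) (c k)%:E < +oo)%E.
  apply: (nneseries_rsqrt_mul_lt_pinfty _ _ (`|C| * M0) (maxn N 1) alpha_half) => n.
  rewrite geq_max => /andP[Nn n_gt0].
  by rewrite normrM -mulrA ler_wpM2l // gtr0_norm ?gamma_gt0 //; exact: gammaM.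
have c_ge0 k : 0 <= c k by rewrite mulr_ge0 ?powR_ge0.
have sum_cV := ae_nneseries_mulV_lt_pinfty hXmeas hVmeas V0 c M c_ge0 EVXM sum_c.
have Dbeta_le : {ae Pr, forall w n, (0 < n)%N ->
    (Dbeta P V beta (ths n w) (ths n.-1 w) <= (`|C * gamma n| * V (Xs n w) `^ eta)%:E)%E}.
  apply: ae_foralln => -[|n]; first exact: aeW.
  apply: filterS (hC n.+1 isT) => w Dw _; rewrite Dbeta_sym (le_trans Dw) //.
  by rewrite lee_fin ler_wpM2r ?powR_ge0 ?ler_norm.
apply: filterS2 sum_cV Dbeta_le => w sum_fin Dw; apply: le_lt_trans sum_fin.
apply: (@nneseries_rsqrt_mul_powR_le _ _ _ _ eta) => [|k|k|k|//].
- lra.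
- exact: normr_ge0.
- exact: hV1.
- exact: Dbeta_ge0 (Xs k w).
Qed.
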